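(* Fix $\Delta>1$ and a known upper bound $D$ on the sparsity. Let $M\in\mathbb{F}^{m\times n}$ be a matrix such that there exists a (deterministic) decoder which, from observing only $\mathbf{b}=M\odot\mathbf{x}$, produces a $\Delta$-approximation $\hat d$ of $d=\|\mathbf{x}\|_0$ for any $\mathbf{x}\in\mathbb{F}^n$ with $d\le D$. Then for any two vectors $\mathbf{v}_1,\mathbf{v}_2\in\mathbb{F}^n$ with $\|\mathbf{v}_2\|_0\le\|\mathbf{v}_1\|_0\le D$, $M$ must have the property $$\frac{\|\mathbf{v}_1\|_0}{\|\mathbf{v}_2\|_0}>\Delta^2\ \Longrightarrow\ M\odot\mathbf{v}_1\neq M\odot\mathbf{v}_2.$$ Conversely, for any matrix $M$ satisfying this property, there exists a decoder producing from $\mathbf{b}=M\odot\mathbf{x}$ an estimate $\hat d$ satisfying $\frac{1}{\Delta}\le\frac{\hat d}{d}\le\Delta$.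
   Context: $\|\mathbf{x}\|_0$ denotes the number of nonzero entries (sparsity) of $\mathbf{x}$. The measurement operation $\odot$ is one of: (i) $\mathbb{F}=\mathbb{F}_2$ and $\odot$ is logical OR, i.e. $(M\odot\mathbf{x})_i=\bigvee_{j:M_{ij}=1}\mathbf{x}_j$ (group testing); or (ii) $\mathbb{F}$ is a finite field or $\mathbb{R}$ and $M\odot\mathbf{x}$ is the ordinary matrix-vector product over $\mathbb{F}$. A decoder is a deterministic function of the observed vector $\mathbf{b}$; an estimate $\hat d$ is a $\Delta$-approximation of $d$ if $\frac{1}{\Delta}\le \frac{\hat d}{d}\le\Delta$. *)

From HB Require Import structures.
From mathcomp Require Import all_boot all_order all_algebra.
Set Implicit Arguments. Unset Strict Implicit. Unset Printing Implicit Defensive.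
Import Order.TTheory GRing.Theory Num.Theory.
Local Open Scope ring_scope.

Definition spars (T : eqType) (z : T) (n : nat) (x : 'cV[T]_n) : nat :=
  #|[pred j : 'I_n | x j 0 != z]|.

(* Group testing measurement: (M (.) x)_i = OR_{j : M_ij = 1} x_j over F_2 = bool. *)
Definition or_mul (m n : nat) (M : 'M[bool]_(m, n)) (x : 'cV[bool]_n) : 'cV[bool]_m :=
  \col_i [exists j, M i j && x j 0].

(* dhat is a Delta-approximation of d: 1/Delta <= dhat/d <= Delta,
   cross-multiplied (d > 0 and Delta > 0), so that for d = 0 it forces dhat = 0. *)
Definition approx (R : realFieldType) (Delta : R) (d : nat) (dhat : R) : Prop :=
  d%:R / Delta <= dhat /\ dhat <= Delta * d%:R.

Definition decodable (T : eqType) (z : T) (m n : nat)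
    (meas : 'cV[T]_n -> 'cV[T]_m) (R : realFieldType) (Delta : R) (D : nat) : Prop :=
  exists dec : 'cV[T]_m -> R,
    forall x : 'cV[T]_n, (spars z x <= D)%N -> approx Delta (spars z x) (dec (meas x)).

(* The separation property: for ||v2||_0 <= ||v1||_0 <= D,
   ||v1||_0 / ||v2||_0 > Delta^2  ==>  M (.) v1 <> M (.) v2
   (ratio cross-multiplied: ||v1||_0 > Delta^2 * ||v2||_0). *)
Definition separating (T : eqType) (z : T) (m n : nat)
    (meas : 'cV[T]_n -> 'cV[T]_m) (R : realFieldType) (Delta : R) (D : nat) : Prop :=
  forall v1 v2 : 'cV[T]_n,
    (spars z v2 <= spars z v1)%N -> (spars z v1 <= D)%N ->
    Delta ^+ 2 * (spars z v2)%:R < (spars z v1)%:R ->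
    meas v1 <> meas v2.

(* Both directions rest on one inequality. If a single estimate e is a
   Delta-approximation of both d1 and d2, then d1 / Delta <= e <= Delta d2,
   so d1 <= Delta^2 d2: a decoder therefore separates any two vectors whose
   sparsities differ by a factor above Delta^2. Conversely, if M separates
   such vectors, the decoder returning Delta times the least sparsity k of a
   preimage of b works, since k <= ||x||_0 <= Delta^2 k for every x with
   M (.) x = b. Nothing about the measurement map is used, so the theorem holds
   for the linear and the group-testing measurements alike. *)
From HB Require Import structures.
From mathcomp Require Import all_boot all_order all_algebra.
From mathcomp Require Import boolp.
Set Implicit Arguments. Unset Strict Implicit. Unset Printing Implicit Defensive.
Import Order.TTheory GRing.Theory Num.Theory.
Local Open Scope ring_scope.

Section Approximation.

Variables (R : realFieldType) (Delta : R).
Hypothesis Delta_gt0 : 0 < Delta.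

Lemma approx_common_le (d1 d2 : nat) (e : R) :
  approx Delta d1 e -> approx Delta d2 e -> d1%:R <= Delta ^+ 2 * d2%:R.
Proof.
move=> [d1_le _] [_ le_d2]; have := le_trans d1_le le_d2.
by rewrite ler_pdivrMr // mulrAC -expr2.
Qed.

Lemma approx_scaled (d k : nat) :
  (k <= d)%N -> d%:R <= Delta ^+ 2 * k%:R -> approx Delta d (Delta * k%:R).
Proof.
move=> le_kd le_d; split; first by rewrite ler_pdivrMr // mulrAC -expr2.
by rewrite ler_pM2l // ler_nat.
Qed.

End Approximation.

Section Decoding.

Variables (T : eqType) (z : T) (m n : nat) (meas : 'cV[T]_n -> 'cV[T]_m).

Definition least_preimage_spars (b : 'cV[T]_m) : nat :=
  let has_preimage k := `[< exists x, meas x = b /\ spars z x = k >] in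
  match pselect (exists k, has_preimage k) with
  | left ex_k => ex_minn ex_k
  | right _ => 0
  end.

Lemma least_preimage_sparsP (x : 'cV[T]_n) :
  exists2 v, meas v = meas x &
    spars z v = least_preimage_spars (meas x) /\ (spars z v <= spars z x)%N.
Proof.
rewrite /least_preimage_spars; case: pselect => [ex_k | no_k]; last first.
  by case: no_k; exists (spars z x); apply/asboolP; exists x.
case: ex_minnP => k /asboolP [v [meas_v <-]] k_min.
by exists v => //; split => //; apply/k_min/asboolP; exists x.
Qed.

Variables (R : realFieldType) (Delta : R) (D : nat).
Hypothesis Delta_gt0 : 0 < Delta.

Lemma decodable_separating :
  decodable z meas Delta D -> separating z meas Delta D.
Proof.
move=> [dec dec_approx] v1 v2 le21 le1D + meas_eq; apply/negP; rewrite -leNgt.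
have le2D : (spars z v2 <= D)%N := leq_trans le21 le1D.
apply: (approx_common_le Delta_gt0 (dec_approx v1 le1D)).
by rewrite meas_eq; apply: dec_approx.
Qed.

Lemma separating_decodable :
  separating z meas Delta D -> decodable z meas Delta D.
Proof.
move=> sep; exists (fun b => Delta * (least_preimage_spars b)%:R) => x le_xD.
have [v meas_v [<- le_vx]] := least_preimage_sparsP x.
apply: approx_scaled => //; rewrite leNgt; apply/negP => lt_xv.
exact: sep x v le_vx le_xD lt_xv (esym meas_v).
Qed.

End Decoding.

Theorem theorem1 (R : realFieldType) (Delta : R) (D : nat) (hDelta : 1 < Delta) :
  (* case (ii): F a field, ordinary matrix-vector product *)
  (forall (F : fieldType) (m n : nat) (M : 'M[F]_(m, n)),
      (decodable 0 (mulmx M) Delta D -> separating 0 (mulmx M) Delta D) /\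
      (separating 0 (mulmx M) Delta D -> decodable 0 (mulmx M) Delta D)) /\
  (* case (i): group testing over F_2 = bool with logical OR *)
  (forall (m n : nat) (M : 'M[bool]_(m, n)),
      (decodable false (or_mul M) Delta D -> separating false (or_mul M) Delta D) /\
      (separating false (or_mul M) Delta D -> decodable false (or_mul M) Delta D)).
Proof.
have Delta_gt0 : 0 < Delta := lt_trans ltr01 hDelta.
by split=> [F m n M | m n M];
  (split; [exact: decodable_separating | exact: separating_decodable]).
Qed.
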